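(* Let $A=\mathbb{Z}$ and let $g\in G_a$ be covered by $\widehat g\in\widehat G_a$. Suppose $g$ has a periodic point $x$ of period $q$. Then: (1) $\widehat{\mathrm{rot}}_{x,\alpha}(\widehat g)$ exists and equals $n/q$ for some $n\in\mathbb{Z}$. (2) If the function $y\mapsto\rho_{y,\alpha}(\widehat g)$ is measurable, then there exists a $g$-invariant Borel probability measure $\mu$ on $X$ such that $\widehat{\mathrm{rot}}_{\mu,\alpha}(\widehat g)=n/q$ for some $n\in\mathbb{Z}$.
   Context: $X$ is a path-connected space, $a\in\mathrm{H}^1(X;\mathbb{Z})$, $\pi\colon\widehat X_a\to X$ a principal $\mathbb{Z}$-bundle with holonomy $a$, $T_r$ the action of $r\in\mathbb{Z}$. $\widehat G_a$ is the group of bundle automorphisms of $\widehat X_a$ (homeomorphisms $\widehat g$ with $\pi\circ\widehat g=g\circ\pi$ for a homeomorphism $g$ of $X$, said to cover $g$), and $G_a$ the group of homeomorphisms of $X$ preserving $a$. $\alpha$ is a real singular $1$-cocycle representing $a$, and $\theta\colon\widehat X_a\to\mathbb{R}$ a $0$-cochain with $d\theta=\pi^*\alpha$ and $\theta(T_r\widehat y)=\theta(\widehat y)+r$. For $y\in X$, $\rho_{y,\alpha}(\widehat g)=\theta(\widehat g(\widehat y))-\theta(\widehat y)$ with $\widehat y\in\pi^{-1}(y)$ (independent of choices); $\widehat{\mathrm{rot}}_{y,\alpha}(\widehat g)=\lim_{n\to\infty}\rho_{y,\alpha}(\widehat g^n)/n$ when it exists; for a $g$-invariant Borel probability measure $\mu$,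 $\widehat{\mathrm{rot}}_{\mu,\alpha}(\widehat g)=\int_X\rho_{y,\alpha}(\widehat g)\,d\mu(y)$. *)

From HB Require Import structures.
From mathcomp Require Import all_boot all_order all_algebra.
From mathcomp Require Import all_classical all_reals all_analysis.

Set Implicit Arguments.
Unset Strict Implicit.
Unset Printing Implicit Defensive.

Import Order.TTheory GRing.Theory Num.Theory.
Import numFieldTopology.Exports numFieldNormedType.Exports.
Local Open Scope classical_set_scope.
Local Open Scope ring_scope.

(* A singular 1-simplex is a map sigma : R -> X which is
   continuous on [0,1] and normalized (constant outside [0,1]), so that
   singular 1-simplices correspond exactly to continuous maps [0,1] -> X.
   The standard 2-simplex is Delta2 = {(s,t) | s,t >= 0, s+t <= 1} with
   vertices v0 = (0,0), v1 = (1,0), v2 = (0,1).                          *)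

Definition clamp01 {R : realType} (t : R) : R := Num.max 0 (Num.min t 1).

Definition sing1 {R : realType} {X : topologicalType} (sigma : R -> X) : Prop :=
  {within `[0, 1], continuous sigma} /\ forall t, sigma t = sigma (clamp01 t).

Definition Delta2 {R : realType} : set (R * R) :=
  [set p | 0 <= p.1 /\ 0 <= p.2 /\ p.1 + p.2 <= 1].

Definition sing2 {R : realType} {X : topologicalType} (tau : R * R -> X) : Prop :=
  {within (@Delta2 R), continuous tau}.

(* faces d0 = [v1,v2], d1 = [v0,v2], d2 = [v0,v1] *)
Definition face0 {R : realType} {X : Type} (tau : R * R -> X) : R -> X :=
  fun t => tau (1 - clamp01 t, clamp01 t).
Definition face1 {R : realType} {X : Type} (tau : R * R -> X) : R -> X :=
  fun t => tau (0, clamp01 t).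
Definition face2 {R : realType} {X : Type} (tau : R * R -> X) : R -> X :=
  fun t => tau (clamp01 t, 0).

(* singular 1-cochains with coefficients in A are functions on singular
   1-simplices; 0-cochains are functions on points.                    *)
Definition cocycle1 {R : realType} {X : topologicalType} {A : zmodType}
  (c : (R -> X) -> A) : Prop :=
  forall tau : R * R -> X, sing2 tau ->
    c (face0 tau) - c (face1 tau) + c (face2 tau) = 0.

Definition cohomologous1 {R : realType} {X : topologicalType} {A : zmodType}
  (c c' : (R -> X) -> A) : Prop :=
  exists b : X -> A, forall sigma : R -> X, sing1 sigma ->
    c' sigma = c sigma + (b (sigma 1) - b (sigma 0)).

Definition path_connected {R : realType} (X : topologicalType) : Prop :=
  forall x y : X, exists gamma : R -> X, sing1 gamma /\ gamma 0 = x /\ gamma 1 = y.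

Definition homeomorphism {X : topologicalType} (f : X -> X) : Prop :=
  continuous f /\ exists f' : X -> X, [/\ cancel f f', cancel f' f & continuous f'].

Definition Z_action {Xh : topologicalType} (T : int -> Xh -> Xh) : Prop :=
  [/\ forall z, T 0 z = z,
      forall (r s : int) z, T (r + s) z = T r (T s z)
    & forall r, continuous (T r)].

(* local triviality: every x has an open neighborhood U and an open V in Xh
   mapped homeomorphically onto U by pi (with inverse the local section s),
   such that pi^-1(U) is the union of the translates T r V; hence
   pi^-1(U) is equivariantly homeomorphic to U x Z.                     *)
Definition locally_trivial {X Xh : topologicalType} (pi : Xh -> X)
  (T : int -> Xh -> Xh) : Prop :=
  forall x : X, exists (U : set X) (V : set Xh) (s : X -> Xh),
    [/\ open U /\ U x, open V, {within U, continuous s},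
        (forall y, U y -> V (s y) /\ pi (s y) = y) /\
        (forall z, V z -> U (pi z) /\ s (pi z) = z)
      & (forall z, U (pi z) -> exists r, V (T r z))].

Definition principal_Z_bundle {X Xh : topologicalType} (pi : Xh -> X)
  (T : int -> Xh -> Xh) : Prop :=
  [/\ continuous pi /\ Z_action T,
      (forall r z, pi (T r z) = pi z),
      (forall z z', pi z = pi z' -> exists r, z' = T r z),
      (forall r z, T r z = z -> r = 0)
    & locally_trivial pi T].

(* the holonomy of the bundle is the class of the integral cocycle c:
   lifting a loop gamma, the endpoint is the start translated by c(gamma) *)
Definition has_holonomy {R : realType} {X Xh : topologicalType} (pi : Xh -> X)
  (T : int -> Xh -> Xh) (c : (R -> X) -> int) : Prop :=
  forall (gamma : R -> X) (gammah : R -> Xh),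
    sing1 gamma -> gamma 0 = gamma 1 -> sing1 gammah -> pi \o gammah = gamma ->
    gammah 1 = T (c gamma) (gammah 0).

Definition in_Ga {R : realType} {X : topologicalType} (c : (R -> X) -> int)
  (g : X -> X) : Prop :=
  homeomorphism g /\ cohomologous1 c (fun sigma => c (g \o sigma)).

Definition covers {X Xh : topologicalType} (pi : Xh -> X) (T : int -> Xh -> Xh)
  (gh : Xh -> Xh) (g : X -> X) : Prop :=
  [/\ homeomorphism gh, pi \o gh = g \o pi & forall r z, gh (T r z) = T r (gh z)].

Definition rho {R : realType} {X Xh : Type} (theta : Xh -> R) (pi : Xh -> X)
  (gh : Xh -> Xh) (y : X) : R :=
  match pselect (exists z, pi z = y) with
  | left h => theta (gh (proj1_sig (cid h))) - theta (proj1_sig (cid h))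
  | right _ => 0
  end.

Definition borel (X : ptopologicalType) := g_sigma_algebraType (@open X).

From HB Require Import structures.
From mathcomp Require Import all_boot all_order all_algebra.
From mathcomp Require Import all_classical all_reals all_analysis.
From mathcomp Require Import measurable_realfun.

Import Order.TTheory GRing.Theory Num.Theory.
Import numFieldTopology.Exports numFieldNormedType.Exports.
Local Open Scope classical_set_scope.
Local Open Scope ring_scope.

(* Lift x to some xh. As gh commutes with the deck action, rho (gh^k) x is
   theta (gh^k xh) - theta xh, which telescopes into the Birkhoff sum
   S_k = rho gh x + ... + rho gh (g^(k-1) x).  Since g^q x = x, gh^q xh lies in
   the fibre of xh, so gh^q xh = T m xh and S_q = m is an integer.  Periodicity
   gives S_(q+k) = S_q + S_k, so S_k / k -> m / q; and the uniform probability
   on the orbit of x is g-invariant and integrates rho gh to S_q / q = m / q. *)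

Definition birkhoff_sum {X : Type} {V : nmodType} (g : X -> X) (f : X -> V)
    (k : nat) (x : X) : V :=
  \sum_(i < k) f (iter i g x).

Lemma birkhoff_sumD_period {X : Type} {V : nmodType} (g : X -> X) (f : X -> V)
    (x : X) (q k : nat) :
  iter q g x = x ->
  birkhoff_sum g f (q + k) x = birkhoff_sum g f q x + birkhoff_sum g f k x.
Proof.
move=> gqx; rewrite /birkhoff_sum big_split_ord /=; congr (_ + _).
by apply: eq_bigr => i _; rewrite /= addnC iterD gqx.
Qed.

Section averages.
Variable R : realType.

Lemma bounded_div_cvg0 (v : nat -> R) (C : R) :
  (forall k, `|v k| <= C) -> v k / k%:R @[k --> \oo] --> 0.
Proof.
move=> vC; apply/cvgrPdist_le => e e0; near=> k.
have k0 : 0 < k%:R :> R by rewrite ltr0n; near: k; exact: nbhs_infty_gt.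
rewrite sub0r normrN normrM normfV normr_nat ler_pdivrMr //.
apply: (le_trans (vC k)); rewrite mulrC -ler_pdivrMr //.
by near: k; apply: nbhs_infty_ger.
Unshelve. all: by end_near. Qed.

Lemma quasiperiodic_avg_cvg (u : nat -> R) (q : nat) (a : R) :
  (0 < q)%N -> (forall k, u (q + k)%N = a + u k) ->
  u k / k%:R @[k --> \oo] --> a / q%:R.
Proof.
move=> q0 uq.
(* [v] is [q]-periodic, hence bounded by its values on [0, q). *)
pose v k := u k - k%:R * (a / q%:R).
have vq k : v (q + k)%N = v k.
  have qa : q%:R * (a / q%:R) = a by rewrite mulrC divfK // pnatr_eq0 -lt0n.
  by rewrite /v uq natrD mulrDl qa opprD addrACA subrr add0r.
have vmod k : v k = v (k %% q)%N.
  rewrite {1}(divn_eq k q) addnC.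
  by elim: (k %/ q)%N => [|n IH]; rewrite ?mul0n ?addn0 // mulSn addnCA vq.
pose C := \sum_(b < q) `|v b|.
have vC k : `|v k| <= C.
  rewrite vmod /C (bigD1 (Ordinal (ltn_pmod k q0))) //= lerDl.
  exact: sumr_ge0.
have : (v k / k%:R + a / q%:R) @[k --> \oo] --> 0 + a / q%:R.
  by apply: cvgD; [exact: bounded_div_cvg0 vC | exact: cvg_cst].
rewrite add0r; apply: cvg_trans; apply: near_eq_cvg; near=> k.
have k0 : k%:R != 0 :> R by rewrite pnatr_eq0 -lt0n; near: k; exact: nbhs_infty_gt.
by rewrite /v mulrBl mulrAC divff // mul1r subrK.
Unshelve. all: by end_near. Qed.

Lemma birkhoff_avg_periodic {X : Type} (g : X -> X) (f : X -> R) (x : X) (q : nat) :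
  (0 < q)%N -> iter q g x = x ->
  birkhoff_sum g f k x / k%:R @[k --> \oo] --> birkhoff_sum g f q x / q%:R.
Proof.
move=> q0 gqx; apply: quasiperiodic_avg_cvg => // k.
exact: birkhoff_sumD_period.
Qed.

End averages.

Section dirac_sum.
Context d (T : measurableType d) (R : realType).
Variables (a : nat -> T) (n : nat) (k : {nonneg R}).

Let mu := mscale k (msum (fun i => @dirac _ T (a i) R) n).

Lemma ge0_integral_mscale_dirac_sum (f : T -> \bar R) :
  measurable_fun [set: T] f -> (forall y, 0 <= f y)%E ->
  (\int[mu]_y f y = k%:num%:E * \sum_(i < n) f (a i))%E.
Proof.
move=> mf f0; rewrite ge0_integral_mscale // ge0_integral_measure_sum //.
by congr (_ * _)%E; apply: eq_bigr => i _; rewrite integral_dirac // diracT mul1e.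
Qed.

Lemma integral_mscale_dirac_sum (f : T -> R) : measurable_fun [set: T] f ->
  (\int[mu]_y (f y)%:E = (k%:num * \sum_(i < n) f (a i))%:E)%E.
Proof.
move=> /measurable_EFinP mf.
have [mfp mfn] := (measurable_funepos mf, measurable_funeneg mf).
rewrite integralE !ge0_integral_mscale_dirac_sum //.
rewrite (funerpos f) (funerneg f) !sumEFin -!EFinM -EFinB -mulrBr -sumrB.
by congr (EFin (_ * _)); apply: eq_bigr => i _; rewrite -[in RHS](funrposBneg f).
Qed.

End dirac_sum.

Lemma sum_ord_shift_periodic {V : nmodType} (u : nat -> V) (q : nat) :
  u q = u 0%N -> \sum_(i < q) u i.+1 = \sum_(i < q) u i.
Proof.
case: q => [|q] uq; first by rewrite !big_ord0.
by rewrite big_ord_recr big_ord_recl /= uq addrC.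
Qed.

Section periodic_orbit_measure.
Context d (T : measurableType d) (R : realType).
Variables (g : T -> T) (x : T) (q : nat).
Hypothesis q_gt0 : (0 < q)%N.

Local Notation orbit_sum := (msum (fun i => @dirac _ T (iter i g x) R) q).

(* [mnormalize] falls back to [\d_x] when [orbit_sum] is the zero measure,
   i.e. when [q = 0]. *)
Definition orbit_measure := mnormalize orbit_sum \d_x.

Lemma orbit_measureE A : orbit_measure A = mscale (q%:R^-1)%:nng orbit_sum A.
Proof.
have sumT : orbit_sum setT = q%:R%:E.
  rewrite /msum (eq_bigr (fun _ => 1%E)) => [|i _]; last exact: diracT.
  by rewrite sumEFin sumr_const card_ord.
by rewrite /orbit_measure /mnormalize /= sumT eqe pnatr_eq0 gtn_eqF //= muleC.
Qed.

Lemma orbit_measure_invariant A : iter q g x = x ->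
  orbit_measure (g @^-1` A) = orbit_measure A.
Proof.
move=> gqx; rewrite !orbit_measureE /mscale /=; congr (_ * _)%E.
rewrite /msum -[RHS](sum_ord_shift_periodic (fun i => \d_(iter i g x) A)) /=;
  last by rewrite gqx.
by apply: eq_bigr => i _; rewrite !diracE.
Qed.

Lemma integrable_orbit_measure (f : T -> R) : measurable_fun [set: T] f ->
  orbit_measure.-integrable [set: T] (EFin \o f).
Proof.
move=> mf; apply/integrableP; split; first exact/measurable_EFinP.
rewrite (eq_measure_integral (mscale (q%:R^-1)%:nng orbit_sum)) => [|A _ _];
  last exact: orbit_measureE.
rewrite ge0_integral_mscale_dirac_sum //; last exact/measurableT_comp/measurable_EFinP.
by rewrite sumEFin -EFinM ltry.
Qed.

Lemma integral_orbit_measure (f : T -> R) : measurable_fun [set: T] f ->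
  (\int[orbit_measure]_y (f y)%:E = (birkhoff_sum g f q x / q%:R)%:E)%E.
Proof.
move=> mf; rewrite (eq_measure_integral (mscale (q%:R^-1)%:nng orbit_sum))
  => [|A _ _]; last exact: orbit_measureE.
by rewrite integral_mscale_dirac_sum // mulrC.
Qed.

End periodic_orbit_measure.

Lemma locally_trivial_surjective [X Xh : topologicalType] [pi : Xh -> X]
    [T : int -> Xh -> Xh] :
  locally_trivial pi T -> forall x, exists z, pi z = x.
Proof.
move=> loc x; have [U [V [s [[_ Ux] _ _ [/(_ x Ux) [_ <-] _] _]]]] := loc x.
by exists (s x).
Qed.

Section equivariant_lifts.
Context [X Xh : Type] [R : realType] [pi : Xh -> X] [T : int -> Xh -> Xh]
  [theta : Xh -> R].
Hypothesis pi_fiber : forall z z', pi z = pi z' -> exists r, z' = T r z.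
Hypothesis theta_T : forall r z, theta (T r z) = theta z + r%:~R.

Lemma rhoE (h : Xh -> Xh) : (forall r z, h (T r z) = T r (h z)) ->
  forall z, rho theta pi h (pi z) = theta (h z) - theta z.
Proof.
move=> hT z; rewrite /rho; case: pselect => [e|[]]; last by exists z.
case: cid => z0 /= /pi_fiber [r ->].
by rewrite hT !theta_T opprD addrACA subrr addr0.
Qed.

Context [g : X -> X] [gh : Xh -> Xh].
Hypothesis pi_gh : forall z, pi (gh z) = g (pi z).
Hypothesis gh_T : forall r z, gh (T r z) = T r (gh z).

Lemma pi_iter k z : pi (iter k gh z) = iter k g (pi z).
Proof. by elim: k => //= k IH; rewrite pi_gh IH. Qed.

Lemma iter_equivariant k r z : iter k gh (T r z) = T r (iter k gh z).
Proof. by elim: k => //= k IH; rewrite IH gh_T. Qed.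

Lemma rho_iter k z :
  rho theta pi (iter k gh) (pi z) = birkhoff_sum g (rho theta pi gh) k (pi z).
Proof.
rewrite rhoE; last exact: iter_equivariant.
have := telescope_sumr (fun i => theta (iter i gh z)) (leq0n k).
rewrite big_mkord /= => <-.
by apply: eq_bigr => i _; rewrite -pi_iter rhoE.
Qed.

Lemma birkhoff_rho_period_int q z : iter q g (pi z) = pi z ->
  exists m : int, birkhoff_sum g (rho theta pi gh) q (pi z) = m%:~R.
Proof.
rewrite -pi_iter => /esym/pi_fiber [m gqz]; exists m.
rewrite -rho_iter rhoE; last exact: iter_equivariant.
by rewrite gqz theta_T addrAC subrr add0r.
Qed.

End equivariant_lifts.

Theorem proposition2p9 (R : realType) (X : ptopologicalType) (Xh : topologicalType)
  (c : (R -> X) -> int) (alpha : (R -> X) -> R)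
  (pi : Xh -> X) (T : int -> Xh -> Xh) (theta : Xh -> R)
  (g : X -> X) (gh : Xh -> Xh) (x : X) (q : nat) :
  path_connected (R := R) X ->
  cocycle1 c ->
  principal_Z_bundle pi T ->
  has_holonomy pi T c ->
  cocycle1 alpha ->
  cohomologous1 (fun sigma => (c sigma)%:~R) alpha ->
  (forall sigmah : R -> Xh, sing1 sigmah ->
     theta (sigmah 1) - theta (sigmah 0) = alpha (pi \o sigmah)) ->
  (forall (r : int) (z : Xh), theta (T r z) = theta z + r%:~R) ->
  in_Ga c g ->
  covers pi T gh g ->
  (0 < q)%N -> iter q g x = x -> (forall k, (0 < k < q)%N -> iter k g x <> x) ->
  (exists n : int,
     (fun k : nat => rho theta pi (iter k gh) x / k%:R) @ \oo --> (n%:~R / q%:R : R))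
  /\
  (measurable_fun [set: borel X] (rho theta pi gh : borel X -> R) ->
   exists mu : probability (borel X) R,
     (forall A : set (borel X), measurable A -> mu (g @^-1` A) = mu A) /\
     exists n : int,
       mu.-integrable [set: borel X] (fun y => (rho theta pi gh y)%:E) /\
       (\int[mu]_y (rho theta pi gh y)%:E = ((n%:~R / q%:R : R))%:E)%E).
Proof.
move=> _ _ [_ _ fiber _ loc] _ _ _ _ theta_T _ [_ pi_gh_fun gh_T] q_gt0 gqx _.
have pi_gh z : pi (gh z) = g (pi z) by rewrite -[LHS]/((pi \o gh) z) pi_gh_fun.
have [xh xhx] := locally_trivial_surjective loc x; subst x.
have [m Sm] := birkhoff_rho_period_int fiber theta_T pi_gh gh_T q xh gqx.
split.
  exists m; rewrite -Sm.
  have -> : (fun k => rho theta pi (iter k gh) (pi xh) / k%:R) =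
            (fun k => birkhoff_sum g (rho theta pi gh) k (pi xh) / k%:R).
    by apply/funext => k; rewrite (rho_iter fiber theta_T pi_gh gh_T).
  exact: birkhoff_avg_periodic.
move=> mf; exists (@orbit_measure _ (borel X) R g (pi xh) q); split.
  by move=> A _; exact: orbit_measure_invariant.
exists m; split; first exact: integrable_orbit_measure.
by rewrite integral_orbit_measure // Sm.
Qed.
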